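(* Let $m,n_1,n_2\in\mathbb{N}$ with $m\ge1$. For $i=1,2$ let $\ell_i:V_i\to\mathbb{Z}_m$ be a $\mathbb{Z}_m$-cordial labeling of the friendship graph $F_{n_i}$ with the central vertex labeled $0$. Assume moreover that the labeling $\ell_2$ of $F_{n_2}$ has vertex and edge frequency distributions $f_{V_2}(0)=r+1$, $f_{V_2}(i)=r$ for all $i\ne0$, and $f_{E_2}(j)=s$ for all $j\in\mathbb{Z}_m$, for some integers $r,s$. Then the labeling $F_{n_1}+F_{n_2}$ of $F_{n_1+n_2}$ is $\mathbb{Z}_m$-cordial.
   Context: For $n\in\mathbb{N}$, the friendship graph $F_n$ is the union of $n$ copies of the triangle $C_3$ joined at a single common (central) vertex. For labelings $\ell_i$ of $F_{n_i}$ ($i=1,2$) both labeling the central vertex $0$, $F_{n_1}+F_{n_2}$ denotes the labeling of $F_{n_1+n_2}$ whose central vertex is labeled $0$, whose first $n_1$ triangles are labeled as by $\ell_1$ and whose remaining $n_2$ triangles are labeled as by $\ell_2$. For an abelian group $A$ and a graph $G=(V,E)$, a vertex labeling $\ell:V\to A$ induces an edge labeling $\ell(\{v_1,v_2\})=\ell(v_1)+\ell(v_2)$. Let $f_V(a)=|\{v\in V:\ell(v)=a\}|$ and $f_E(a)=|\{e\in E:\ell(e)=a\}|$. The labeling is $A$-cordial if $|f_V(a_1)-f_V(a_2)|\le 1$ and $|f_E(a_1)-f_E(a_2)|\le 1$ for all $a_1,a_2\in A$. *)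

From mathcomp Require Import all_boot all_order all_algebra.
Set Implicit Arguments. Unset Strict Implicit. Unset Printing Implicit Defensive.
Import GRing.Theory.
Local Open Scope ring_scope.

(* Z_m for m >= 1: the ordinal type 'I_m, written 'I_(m.-1).+1 so that it
   carries MathComp's additive group structure (Z/mZ). *)
Definition Zm (m : nat) : finZmodType := 'I_(m.-1).+1.

(* Vertices of the friendship graph F_n: None = central vertex,
   Some (k, b) = the two non-central vertices (b = false/true) of triangle k. *)
Definition fvert (n : nat) : finType := option ('I_n * bool).

(* Edges of F_n: for triangle k, (k,0) and (k,1) are the two spokes from the
   centre, (k,2) is the edge between the two outer vertices. *)
Definition fedge (n : nat) : finType := ('I_n * 'I_3)%type.

Definition fends (n : nat) (e : fedge n) : fvert n * fvert n :=
  let k := e.1 in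
  match val e.2 with
  | 0%N => (None, Some (k, false))
  | 1%N => (None, Some (k, true))
  | _ => (Some (k, false), Some (k, true))
  end.

Section Freq.
Variables (m n : nat) (l : fvert n -> Zm m).

Definition elab (e : fedge n) : Zm m := l (fends e).1 + l (fends e).2.

Definition fV (a : Zm m) : nat := #|[set v : fvert n | l v == a]|.
Definition fE (a : Zm m) : nat := #|[set e : fedge n | elab e == a]|.

Definition cordial : Prop :=
  (forall a1 a2 : Zm m, (fV a1 <= (fV a2).+1)%N) /\
  (forall a1 a2 : Zm m, (fE a1 <= (fE a2).+1)%N).
End Freq.

Definition fsum (m n1 n2 : nat) (l1 : fvert n1 -> Zm m) (l2 : fvert n2 -> Zm m)
  : fvert (n1 + n2) -> Zm m :=
  fun v => match v with
  | None => 0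
  | Some (i, b) =>
      match split i with
      | inl j => l1 (Some (j, b))
      | inr j => l2 (Some (j, b))
      end
  end.

From mathcomp Require Import all_boot all_order all_algebra.
From mathcomp Require Import zify.

Set Implicit Arguments.
Unset Strict Implicit.
Unset Printing Implicit Defensive.

Local Open Scope ring_scope.

(* Counting triangle by triangle, the frequencies of F_{n1} + F_{n2} are the
   sums of those of the two summands, except that the shared centre is
   counted once instead of twice.  The surplus vertex labelled 0 in l2 makes
   up for the duplicate centre, so every vertex frequency of the sum is that
   of l1 shifted by r and every edge frequency that of l1 shifted by s; a
   uniform shift preserves cordiality. *)

Lemma card_set_sum (T : finType) (P : pred T) :
  #|[set x | P x]| = (\sum_x P x)%N.
Proof. by rewrite -sum1dep_card big_mkcond; apply: eq_bigr => x _; case: (P x). Qed.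

Lemma sum_option (T : finType) (F : option T -> nat) :
  (\sum_(v : option T) F v = F None + \sum_(x : T) F (Some x))%N.
Proof.
rewrite (bigD1 None) //=; congr (_ + _)%N.
rewrite (reindex_omap Some id) //=; last by case.
by apply: eq_bigl => x; rewrite eqxx.
Qed.

Section FriendshipFrequencies.
Variables (m n : nat) (l : fvert n -> Zm m).

Lemma fV_triangles a :
  fV l a = ((l None == a) + \sum_(k < n) \sum_(b : bool) (l (Some (k, b)) == a))%N.
Proof.
rewrite /fV card_set_sum sum_option pair_bigA; congr (_ + _)%N.
by apply: eq_bigr => -[].
Qed.

Lemma fE_triangles a :
  fE l a = (\sum_(k < n) \sum_(j < 3) (elab l (k, j) == a))%N.
Proof. by rewrite /fE card_set_sum pair_bigA; apply: eq_bigr => -[]. Qed.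

End FriendshipFrequencies.

Lemma split_lshift m n (i : 'I_m) : split (lshift n i) = inl i.
Proof. exact: (unsplitK (inl _ i)). Qed.

Lemma split_rshift m n (i : 'I_n) : split (rshift m i) = inr i.
Proof. exact: (unsplitK (inr _ i)). Qed.

Section FriendshipSum.
Variables (m n1 n2 : nat) (l1 : fvert n1 -> Zm m) (l2 : fvert n2 -> Zm m).

Hypotheses (l1_centre : l1 None = 0) (l2_centre : l2 None = 0).

Lemma elab_fsum_lshift k j : elab (fsum l1 l2) (lshift n2 k, j) = elab l1 (k, j).
Proof. by case: j => -[|[|j]] ?; rewrite /elab /= split_lshift ?l1_centre. Qed.

Lemma elab_fsum_rshift k j : elab (fsum l1 l2) (rshift n1 k, j) = elab l2 (k, j).
Proof. by case: j => -[|[|j]] ?; rewrite /elab /= split_rshift ?l2_centre. Qed.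

Lemma fV_fsum a : (fV (fsum l1 l2) a + (a == 0%R) = fV l1 a + fV l2 a)%N.
Proof.
rewrite !fV_triangles big_split_ord /= l1_centre l2_centre [a == _]eq_sym.
rewrite addnAC addnACA.
by congr (_ + _ + (_ + _))%N; apply: eq_bigr => k _; apply: eq_bigr => b _;
  rewrite ?split_lshift ?split_rshift.
Qed.

Lemma fE_fsum a : fE (fsum l1 l2) a = (fE l1 a + fE l2 a)%N.
Proof.
rewrite !fE_triangles big_split_ord /=.
by congr (_ + _)%N; apply: eq_bigr => k _; apply: eq_bigr => j _;
  rewrite ?elab_fsum_lshift ?elab_fsum_rshift.
Qed.

End FriendshipSum.

Theorem lemma8p2 (m n1 n2 : nat) (l1 : fvert n1 -> Zm m) (l2 : fvert n2 -> Zm m)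
  (r s : nat) :
  (1 <= m)%N ->
  cordial l1 -> l1 None = 0 ->
  cordial l2 -> l2 None = 0 ->
  fV l2 0 = r.+1 ->
  (forall i : Zm m, i != 0 -> fV l2 i = r) ->
  (forall j : Zm m, fE l2 j = s) ->
  cordial (fsum l1 l2).
Proof.
move=> _ [cordV cordE] l1_centre _ l2_centre fV_l2_0 fV_l2 fE_l2.
have fV_shift a : fV (fsum l1 l2) a = (fV l1 a + r)%N.
  have := fV_fsum l1_centre l2_centre a.
  have [->|a_nz] := eqVneq a 0; first by rewrite fV_l2_0; lia.
  by rewrite fV_l2 //; lia.
have fE_shift a : fE (fsum l1 l2) a = (fE l1 a + s)%N.
  by rewrite (fE_fsum l1_centre l2_centre) fE_l2.
split=> a1 a2; rewrite ?fV_shift ?fE_shift -addSn leq_add2r.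
  exact: cordV.
exact: cordE.
Qed.
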